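(* Let $A \subseteq \mathbb{C}$ be countable and dense in $\mathbb{C}$. Then there is a transcendental entire function $f$ such that $f^{(s)}(A) \subseteq A$ for all integers $s \geq 0$.
   Context: A transcendental entire function is an entire function $\mathbb{C}\to\mathbb{C}$ that is not a polynomial. $f^{(s)}$ denotes the $s$-th derivative of $f$, with $f^{(0)}=f$. *)

From Stdlib Require Import Reals.
Open Scope R_scope.

Definition CC : Type := (R * R)%type.
Definition C0 : CC := (0, 0).
Definition Cadd (z w : CC) : CC := (fst z + fst w, snd z + snd w).
Definition Copp (z : CC) : CC := (- fst z, - snd z).
Definition Csub (z w : CC) : CC := Cadd z (Copp w).
Definition Cmul (z w : CC) : CC :=
  (fst z * fst w - snd z * snd w, fst z * snd w + snd z * fst w).
Definition Cnorm (z : CC) : R := sqrt (fst z * fst z + snd z * snd z).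

Fixpoint Cpow (z : CC) (n : nat) : CC :=
  match n with O => (1, 0) | S m => Cmul z (Cpow z m) end.

Fixpoint Csum (f : nat -> CC) (n : nat) : CC :=
  match n with O => f O | S m => Cadd (Csum f m) (f (S m)) end.

Definition is_complex_derivative (f g : CC -> CC) : Prop :=
  forall z : CC, forall eps : R, 0 < eps -> exists delta : R, 0 < delta /\
    forall h : CC, Cnorm h < delta ->
      Cnorm (Csub (Csub (f (Cadd z h)) (f z)) (Cmul (g z) h)) <= eps * Cnorm h.

Definition entire (f : CC -> CC) : Prop := exists g, is_complex_derivative f g.

Definition is_polynomial (f : CC -> CC) : Prop :=
  exists (n : nat) (c : nat -> CC), forall z, f z = Csum (fun k => Cmul (c k) (Cpow z k)) n.

Definition transcendental_entire (f : CC -> CC) : Prop := entire f /\ ~ is_polynomial f.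

(* A is countable: it is the range of some sequence (A nonempty here anyway). *)
Definition countable_set (A : CC -> Prop) : Prop :=
  exists e : nat -> CC, forall z, A z <-> exists n, e n = z.

Definition dense_set (A : CC -> Prop) : Prop :=
  forall z : CC, forall eps : R, 0 < eps -> exists a, A a /\ Cnorm (Csub a z) < eps.

(* Enumerate A as e 0, e 1, ... and all pairs (s, k) by Cantor's diagonal
   enumeration; the n-th interpolation condition asks that f^(s_n)(a_n) lie in
   A, where (s_n, k_n) is the n-th pair and a_n = e k_n.  We take
   f = sum_n c_n Q_n, where the polynomial Q_n has a nonzero s_n-th derivative
   at a_n while its s_m-th derivative vanishes at a_m for every earlier
   condition m (conditions duplicating an earlier one get c_n = 0).  Hence
   f^(s_n)(a_n) = sum_{m <= n} c_m Q_m^(s_n)(a_n), and by density c_n can be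
   chosen recursively to put this value at a nonzero point of A; taking |c_n|
   small also makes every differentiated series sum_n c_n Q_n^(s) converge
   locally uniformly, which justifies term-by-term differentiation.  As
   f^(s)(e 0) <> 0 for every s, f is not a polynomial. *)

From Stdlib Require Import Reals Lra Lia Psatz List Classical ClassicalEpsilon Arith ZArith.
From Coquelicot Require Complex.
Open Scope R_scope.
Import ListNotations.

(* Identities between complex expressions reduce to polynomial identities of
   the real and imaginary parts; [cring] proves them (abstract subterms should
   first be named with [set] so that they are split into components). *)
Ltac cring := repeat match goal with z : CC |- _ => destruct z end;
  unfold Csub, Cadd, Copp, Cmul, C0 in *; simpl in *; f_equal; ring.

(* [CC] and its operations are definitionally Coquelicot's complex numbers;
   only the modulus is written differently, so its theory is imported. *)
Lemma Cnorm_Cmod z : Cnorm z = Complex.Cmod z.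
Proof. unfold Cnorm, Complex.Cmod. f_equal. ring. Qed.

Lemma Cnorm_nonneg z : 0 <= Cnorm z.
Proof. rewrite Cnorm_Cmod. apply Complex.Cmod_ge_0. Qed.

Lemma Cnorm_add z w : Cnorm (Cadd z w) <= Cnorm z + Cnorm w.
Proof. rewrite !Cnorm_Cmod. exact (Complex.Cmod_triangle z w). Qed.

Lemma Cnorm_mul z w : Cnorm (Cmul z w) = Cnorm z * Cnorm w.
Proof. rewrite !Cnorm_Cmod. exact (Complex.Cmod_mult z w). Qed.

Lemma Cnorm_opp z : Cnorm (Copp z) = Cnorm z.
Proof. rewrite !Cnorm_Cmod. exact (Complex.Cmod_opp z). Qed.

Lemma Cnorm_sub z w : Cnorm (Csub z w) <= Cnorm z + Cnorm w.
Proof. unfold Csub. rewrite <- (Cnorm_opp w). apply Cnorm_add. Qed.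

Lemma Cnorm_C0 : Cnorm C0 = 0.
Proof. rewrite Cnorm_Cmod. exact Complex.Cmod_0. Qed.

Lemma Cnorm_pos z : z <> C0 -> 0 < Cnorm z.
Proof. rewrite Cnorm_Cmod. apply Complex.Cmod_gt_0. Qed.

Lemma Cnorm_components z : Rabs (fst z) <= Cnorm z /\ Rabs (snd z) <= Cnorm z.
Proof.
  rewrite Cnorm_Cmod. pose proof (Complex.Rmax_Cmod z).
  split; eapply Rle_trans; eauto; [apply Rmax_l | apply Rmax_r].
Qed.

Lemma Cnorm_le_of_sq z c : 0 <= c -> fst z * fst z + snd z * snd z <= c * c -> Cnorm z <= c.
Proof.
  intros Hc H. unfold Cnorm. rewrite <- (sqrt_square c Hc).
  apply sqrt_le_1_alt. exact H.
Qed.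

Definition CR (r : R) : CC := (r, 0).

Lemma Cnorm_CR r : Cnorm (CR r) = Rabs r.
Proof. rewrite Cnorm_Cmod. exact (Complex.Cmod_R r). Qed.

Lemma CR_neq0 r : r <> 0 -> CR r <> C0.
Proof. intros Hr E. apply Hr. exact (f_equal fst E). Qed.

Lemma Cinv_r z : z <> C0 -> Cmul z (Complex.Cinv z) = CR 1.
Proof. exact (Complex.Cinv_r z). Qed.

Lemma Cnorm_inv z : z <> C0 -> Cnorm (Complex.Cinv z) = / Cnorm z.
Proof. intro H. rewrite !Cnorm_Cmod. exact (Complex.Cmod_inv z H). Qed.

Lemma Cmul_neq0 z w : z <> C0 -> w <> C0 -> Cmul z w <> C0.
Proof.
  intros Hz Hw E. apply Cnorm_pos in Hz; apply Cnorm_pos in Hw.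
  pose proof (Cnorm_mul z w) as N. rewrite E, Cnorm_C0 in N. nra.
Qed.

Lemma Cpow_neq0 z n : z <> C0 -> Cpow z n <> C0.
Proof.
  intro H. induction n as [|n IH]; simpl.
  - apply CR_neq0. lra.
  - apply Cmul_neq0; auto.
Qed.

Lemma Csub_eq0 z w : Csub z w = C0 -> z = w.
Proof.
  destruct z, w. unfold Csub, Cadd, Copp, C0; simpl. intro E. inversion E. f_equal; lra.
Qed.

Lemma CC_dec (z w : CC) : {z = w} + {z <> w}.
Proof.
  destruct z as [a b], w as [c d].
  destruct (Req_EM_T a c), (Req_EM_T b d); subst; auto;
    right; intro E; inversion E; auto.
Qed.

(* Two derivatives of the same function agree: test the defining estimate
   with a small real increment [h]. *)
Lemma deriv_unique f g1 g2 : is_complex_derivative f g1 -> is_complex_derivative f g2 ->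
  forall z, g1 z = g2 z.
Proof.
  intros H1 H2 z. destruct (CC_dec (Csub (g1 z) (g2 z)) C0) as [E|E].
  { apply Csub_eq0, E. }
  set (d := Cnorm (Csub (g1 z) (g2 z))). assert (Hd : 0 < d) by (apply Cnorm_pos; auto).
  destruct (H1 z (d/4)) as [d1 [Hd1 K1]]; [lra|].
  destruct (H2 z (d/4)) as [d2 [Hd2 K2]]; [lra|].
  set (t := Rmin d1 d2 / 2).
  assert (Ht : 0 < t) by (unfold t; apply Rdiv_lt_0_compat; [apply Rmin_pos|]; lra).
  set (h := CR t).
  assert (Hh : Cnorm h = t) by (unfold h; rewrite Cnorm_CR; apply Rabs_right; lra).
  specialize (K1 h ltac:(rewrite Hh; unfold t; pose proof (Rmin_l d1 d2); lra)).
  specialize (K2 h ltac:(rewrite Hh; unfold t; pose proof (Rmin_r d1 d2); lra)).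
  assert (Split : Cmul (Csub (g1 z) (g2 z)) h =
     Csub (Csub (Csub (f (Cadd z h)) (f z)) (Cmul (g2 z) h))
          (Csub (Csub (f (Cadd z h)) (f z)) (Cmul (g1 z) h))).
  { set (u := f (Cadd z h)); set (v := f z); set (a := g1 z); set (b := g2 z). cring. }
  assert (Bound : Cnorm (Cmul (Csub (g1 z) (g2 z)) h) <= d/4 * t + d/4 * t).
  { rewrite Split, <- Hh. eapply Rle_trans; [apply Cnorm_sub | lra]. }
  rewrite Cnorm_mul, Hh in Bound. fold d in Bound. nra.
Qed.

Lemma deriv_ext f1 f2 g : (forall z, f1 z = f2 z) ->
  is_complex_derivative f1 g -> is_complex_derivative f2 g.
Proof.
  intros E H z eps He. destruct (H z eps He) as [d [Hd K]]. exists d; split; auto.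
  intros h Hh. rewrite <- !E. auto.
Qed.

Lemma deriv_add f g f' g' : is_complex_derivative f f' -> is_complex_derivative g g' ->
  is_complex_derivative (fun z => Cadd (f z) (g z)) (fun z => Cadd (f' z) (g' z)).
Proof.
  intros H1 H2 z eps He.
  destruct (H1 z (eps/2)) as [d1 [Hd1 K1]]; [lra|].
  destruct (H2 z (eps/2)) as [d2 [Hd2 K2]]; [lra|].
  exists (Rmin d1 d2); split; [apply Rmin_pos; auto|].
  intros h Hh. pose proof (Rmin_l d1 d2); pose proof (Rmin_r d1 d2).
  specialize (K1 h ltac:(lra)); specialize (K2 h ltac:(lra)).
  replace (Csub (Csub (Cadd (f (Cadd z h)) (g (Cadd z h))) (Cadd (f z) (g z)))
                (Cmul (Cadd (f' z) (g' z)) h))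
    with (Cadd (Csub (Csub (f (Cadd z h)) (f z)) (Cmul (f' z) h))
               (Csub (Csub (g (Cadd z h)) (g z)) (Cmul (g' z) h))).
  - eapply Rle_trans; [apply Cnorm_add | lra].
  - set (a := f (Cadd z h)); set (b := g (Cadd z h)); set (c := f z); set (c' := g z);
      set (u := f' z); set (v := g' z). cring.
Qed.

Lemma deriv_scale c f f' : is_complex_derivative f f' ->
  is_complex_derivative (fun z => Cmul c (f z)) (fun z => Cmul c (f' z)).
Proof.
  intros H z eps He. pose proof (Cnorm_nonneg c) as Hc.
  destruct (H z (eps / (Cnorm c + 1))) as [d [Hd K]];
    [apply Rdiv_lt_0_compat; lra|].
  exists d; split; auto. intros h Hh. specialize (K h Hh).
  replace (Csub (Csub (Cmul c (f (Cadd z h))) (Cmul c (f z))) (Cmul (Cmul c (f' z)) h))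
    with (Cmul c (Csub (Csub (f (Cadd z h)) (f z)) (Cmul (f' z) h)))
    by (set (a := f (Cadd z h)); set (b := f z); set (u := f' z); cring).
  rewrite Cnorm_mul. pose proof (Cnorm_nonneg h).
  assert (Hratio : Cnorm c * (eps / (Cnorm c + 1)) <= eps).
  { replace (Cnorm c * (eps / (Cnorm c + 1))) with (eps * (Cnorm c / (Cnorm c + 1)))
      by (field; lra).
    assert (Cnorm c / (Cnorm c + 1) <= 1)
      by (apply Rmult_le_reg_r with (Cnorm c + 1); [lra|]; field_simplify; lra).
    nra. }
  apply Rle_trans with (Cnorm c * (eps / (Cnorm c + 1) * Cnorm h));
    [apply Rmult_le_compat_l; auto | nra].
Qed.

(** * Polynomials as coefficient lists *)

(* [peval p] is the polynomial function with coefficient list [p] (constant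
   term first), evaluated by Horner's rule. *)
Fixpoint peval (p : list CC) (z : CC) : CC :=
  match p with [] => C0 | c :: q => Cadd c (Cmul z (peval q z)) end.

Fixpoint padd (p q : list CC) : list CC :=
  match p, q with
  | [], _ => q
  | _, [] => p
  | a :: p', b :: q' => Cadd a b :: padd p' q'
  end.

Definition pscale (c : CC) (p : list CC) : list CC := map (Cmul c) p.

(* Formal derivative, from the product rule (c + z q)' = q + z q'; the
   constant case returns [] so that the length drops by one. *)
Fixpoint pderiv (p : list CC) : list CC :=
  match p with
  | [] => []
  | c :: q => match q with [] => [] | _ => padd q (C0 :: pderiv q) end
  end.

Fixpoint pderivn (t : nat) (p : list CC) : list CC :=
  match t with O => p | S t' => pderivn t' (pderiv p) end.

Fixpoint pmajor (r : R) (p : list CC) : R :=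
  match p with [] => 0 | c :: q => Cnorm c + r * pmajor r q end.

Definition pmul_lin (a : CC) (p : list CC) : list CC := padd (C0 :: p) (pscale (Copp a) p).

Fixpoint pmul_pow (a : CC) (j : nat) (p : list CC) : list CC :=
  match j with O => p | S j' => pmul_lin a (pmul_pow a j' p) end.

Lemma peval_padd p q z : peval (padd p q) z = Cadd (peval p z) (peval q z).
Proof.
  revert q; induction p as [|a p IH]; intros [|b q]; simpl; try cring.
  rewrite IH. set (u := peval p z); set (v := peval q z). cring.
Qed.

Lemma peval_pscale c p z : peval (pscale c p) z = Cmul c (peval p z).
Proof.
  unfold pscale. induction p as [|a p IH]; simpl; [cring|].
  rewrite IH. set (u := peval p z). cring.
Qed.

Lemma peval_pmul_lin a p z : peval (pmul_lin a p) z = Cmul (Csub z a) (peval p z).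
Proof.
  unfold pmul_lin. rewrite peval_padd, peval_pscale. simpl. set (u := peval p z). cring.
Qed.

Lemma peval_pmul_pow a j p z :
  peval (pmul_pow a j p) z = Cmul (Cpow (Csub z a) j) (peval p z).
Proof.
  induction j as [|j IH]; simpl; [set (u := peval p z); cring|].
  rewrite peval_pmul_lin, IH. set (u := peval p z); set (w := Cpow (Csub z a) j). cring.
Qed.

Lemma peval_pderiv_cons c q z :
  peval (pderiv (c :: q)) z = Cadd (peval q z) (Cmul z (peval (pderiv q) z)).
Proof.
  simpl. destruct q as [|b q]; simpl; [cring|].
  rewrite peval_padd. simpl. cring.
Qed.

Lemma pderivn_S t p : pderivn (S t) p = pderiv (pderivn t p).
Proof. revert p; induction t as [|t IH]; intro p; simpl; auto. rewrite <- IH. auto. Qed.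

Lemma pmajor_nonneg r p : 0 <= r -> 0 <= pmajor r p.
Proof. intro Hr; induction p as [|c q IH]; simpl; [lra|]. pose proof (Cnorm_nonneg c). nra. Qed.

Lemma peval_bound r p w : Cnorm w <= r -> Cnorm (peval p w) <= pmajor r p.
Proof.
  intro Hw. assert (0 <= r) by (pose proof (Cnorm_nonneg w); lra).
  induction p as [|c q IH]; simpl; [rewrite Cnorm_C0; lra|].
  eapply Rle_trans; [apply Cnorm_add|]. rewrite Cnorm_mul.
  pose proof (Cnorm_nonneg w); pose proof (Cnorm_nonneg (peval q w)).
  pose proof (pmajor_nonneg r q H). nra.
Qed.

Lemma peval_lipschitz r p z h : Cnorm z + 1 <= r -> Cnorm h <= 1 ->
  Cnorm (Csub (peval p (Cadd z h)) (peval p z)) <= Cnorm h * pmajor r p.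
Proof.
  intros Hz Hh. assert (0 <= r) by (pose proof (Cnorm_nonneg z); lra).
  induction p as [|c q IH]; simpl.
  - replace (Csub C0 C0) with C0 by cring. rewrite Cnorm_C0. lra.
  - replace (Csub (Cadd c (Cmul (Cadd z h) (peval q (Cadd z h)))) (Cadd c (Cmul z (peval q z))))
      with (Cadd (Cmul z (Csub (peval q (Cadd z h)) (peval q z))) (Cmul h (peval q (Cadd z h))))
      by (set (u := peval q (Cadd z h)); set (v := peval q z); cring).
    eapply Rle_trans; [apply Cnorm_add|]. rewrite !Cnorm_mul.
    assert (Cnorm (peval q (Cadd z h)) <= pmajor r q)
      by (apply peval_bound; eapply Rle_trans; [apply Cnorm_add | lra]).
    pose proof (Cnorm_nonneg z); pose proof (Cnorm_nonneg h); pose proof (Cnorm_nonneg c).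
    pose proof (pmajor_nonneg r q H).
    assert (Cnorm z * Cnorm (Csub (peval q (Cadd z h)) (peval q z))
            <= Cnorm z * (Cnorm h * pmajor r q)) by (apply Rmult_le_compat_l; auto).
    assert (Cnorm h * Cnorm (peval q (Cadd z h)) <= Cnorm h * pmajor r q)
      by (apply Rmult_le_compat_l; auto).
    assert (Cnorm h * pmajor r q * (Cnorm z + 1) <= Cnorm h * pmajor r q * r)
      by (apply Rmult_le_compat_l; nra).
    nra.
Qed.

Definition taylor_rem (p : list CC) z h : CC :=
  Csub (Csub (peval p (Cadd z h)) (peval p z)) (Cmul (peval (pderiv p) z) h).

Lemma taylor_rem_bound r p z h : Cnorm z + 1 <= r -> Cnorm h <= 1 ->
  Cnorm (taylor_rem p z h) <= (Cnorm h * Cnorm h) * pmajor r p.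
Proof.
  intros Hz Hh. unfold taylor_rem. assert (0 <= r) by (pose proof (Cnorm_nonneg z); lra).
  induction p as [|c q IH].
  - simpl. replace (Csub (Csub C0 C0) (Cmul C0 h)) with C0 by cring. rewrite Cnorm_C0. lra.
  - rewrite peval_pderiv_cons. simpl.
    replace (Csub (Csub (Cadd c (Cmul (Cadd z h) (peval q (Cadd z h))))
                        (Cadd c (Cmul z (peval q z))))
                  (Cmul (Cadd (peval q z) (Cmul z (peval (pderiv q) z))) h))
      with (Cadd (Cmul z (Csub (Csub (peval q (Cadd z h)) (peval q z))
                               (Cmul (peval (pderiv q) z) h)))
                 (Cmul h (Csub (peval q (Cadd z h)) (peval q z))))
      by (set (u := peval q (Cadd z h)); set (v := peval q z);
          set (w := peval (pderiv q) z); cring).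
    eapply Rle_trans; [apply Cnorm_add|]. rewrite !Cnorm_mul.
    pose proof (peval_lipschitz r q z h Hz Hh).
    pose proof (Cnorm_nonneg z); pose proof (Cnorm_nonneg h); pose proof (Cnorm_nonneg c).
    pose proof (pmajor_nonneg r q H).
    assert (Cnorm z * Cnorm (Csub (Csub (peval q (Cadd z h)) (peval q z))
                                  (Cmul (peval (pderiv q) z) h))
       <= Cnorm z * (Cnorm h * Cnorm h * pmajor r q)) by (apply Rmult_le_compat_l; auto).
    assert (Cnorm h * Cnorm (Csub (peval q (Cadd z h)) (peval q z))
            <= Cnorm h * (Cnorm h * pmajor r q)) by (apply Rmult_le_compat_l; auto).
    assert (Cnorm h * Cnorm h * pmajor r q * (Cnorm z + 1)
            <= Cnorm h * Cnorm h * pmajor r q * r) by (apply Rmult_le_compat_l; nra).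
    nra.
Qed.

Lemma deriv_peval p : is_complex_derivative (peval p) (peval (pderiv p)).
Proof.
  intros z eps Heps.
  set (r := Cnorm z + 1). set (N := pmajor r p).
  assert (0 <= N) by (apply pmajor_nonneg; unfold r; pose proof (Cnorm_nonneg z); lra).
  exists (Rmin 1 (eps / (N + 1))). split; [apply Rmin_pos; [lra | apply Rdiv_lt_0_compat; lra]|].
  intros h Hh.
  assert (H1 : Cnorm h <= 1) by (pose proof (Rmin_l 1 (eps/(N+1))); lra).
  assert (H2 : Cnorm h <= eps / (N+1)) by (pose proof (Rmin_r 1 (eps/(N+1))); lra).
  eapply Rle_trans; [apply (taylor_rem_bound r); auto; unfold r; lra|].
  fold N. pose proof (Cnorm_nonneg h).
  assert (Cnorm h * (N + 1) <= eps)
    by (apply (Rmult_le_compat_r (N+1)) in H2; [field_simplify in H2; lra | lra]).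
  nra.
Qed.

Lemma pderiv_ext p q : (forall z, peval p z = peval q z) ->
  forall z, peval (pderiv p) z = peval (pderiv q) z.
Proof.
  intros E. apply (deriv_unique (peval p)); [apply deriv_peval|].
  apply deriv_ext with (f1 := peval q); [intro; symmetry; auto | apply deriv_peval].
Qed.

Lemma pderivn_ext t : forall p q, (forall z, peval p z = peval q z) ->
  forall z, peval (pderivn t p) z = peval (pderivn t q) z.
Proof.
  induction t as [|t IH]; intros p q E z; simpl; auto. apply IH, pderiv_ext, E.
Qed.

Lemma peval_pderiv_padd p q z :
  peval (pderiv (padd p q)) z = Cadd (peval (pderiv p) z) (peval (pderiv q) z).
Proof.
  apply (deriv_unique (peval (padd p q)) _
           (fun z => Cadd (peval (pderiv p) z) (peval (pderiv q) z))); [apply deriv_peval|].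
  apply deriv_ext with (f1 := fun z => Cadd (peval p z) (peval q z));
    [intro; symmetry; apply peval_padd | apply deriv_add; apply deriv_peval].
Qed.

Lemma peval_pderiv_pscale c p z : peval (pderiv (pscale c p)) z = Cmul c (peval (pderiv p) z).
Proof.
  apply (deriv_unique (peval (pscale c p)) _ (fun z => Cmul c (peval (pderiv p) z)));
    [apply deriv_peval|].
  apply deriv_ext with (f1 := fun z => Cmul c (peval p z));
    [intro; symmetry; apply peval_pscale | apply deriv_scale; apply deriv_peval].
Qed.

Lemma peval_pderiv_pmul_lin a p z :
  peval (pderiv (pmul_lin a p)) z = Cadd (peval p z) (Cmul (Csub z a) (peval (pderiv p) z)).
Proof.
  unfold pmul_lin. rewrite peval_pderiv_padd, peval_pderiv_pscale, peval_pderiv_cons.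
  set (u := peval p z); set (v := peval (pderiv p) z). cring.
Qed.

(* Differentiation shortens the coefficient list by one, so a polynomial with
   at most t coefficients has zero t-th derivative. *)
Lemma length_padd p q : length (padd p q) = Nat.max (length p) (length q).
Proof. revert q; induction p; intros [|b q]; simpl; auto. Qed.

Lemma length_pderiv p : length (pderiv p) = pred (length p).
Proof.
  induction p as [|c q IH]; simpl; auto. destruct q as [|b q]; simpl; auto.
  rewrite length_padd. simpl in *. rewrite IH. simpl. lia.
Qed.

Lemma pderivn_short t : forall p, (length p <= t)%nat -> pderivn t p = [].
Proof.
  induction t as [|t IH]; intros p H; simpl.
  - destruct p; simpl in *; auto; lia.
  - apply IH. rewrite length_pderiv. lia.
Qed.

(** * Derivatives at a root of prescribed multiplicity *)

Lemma pderiv_pmul_pow a j : forall r, exists r',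
  (forall z, peval (pderiv (pmul_pow a (S j) r)) z = peval (pmul_pow a j r') z) /\
  peval r' a = Cmul (CR (INR (S j))) (peval r a).
Proof.
  induction j as [|j IH]; intro r.
  - exists (padd r (pmul_lin a (pderiv r))). split.
    + intro z. simpl. rewrite peval_pderiv_pmul_lin, peval_padd, peval_pmul_lin. auto.
    + rewrite peval_padd, peval_pmul_lin. simpl.
      set (u := peval r a); set (v := peval (pderiv r) a). unfold CR. cring.
  - destruct (IH r) as [r2 [E2 V2]]. exists (padd r r2). split.
    + intro z. change (pmul_pow a (S (S j)) r) with (pmul_lin a (pmul_pow a (S j) r)).
      rewrite peval_pderiv_pmul_lin, E2, !peval_pmul_pow, peval_padd. simpl.
      set (u := peval r z); set (v := peval r2 z); set (w := Cpow (Csub z a) j). cring.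
    + rewrite peval_padd, V2, (S_INR (S j)). set (u := peval r a). unfold CR. cring.
Qed.

Lemma pderivn_pmul_pow a t : forall j r, exists r',
  (forall z, peval (pderivn t (pmul_pow a (t + j) r)) z = peval (pmul_pow a j r') z) /\
  (peval r a <> C0 -> peval r' a <> C0).
Proof.
  induction t as [|t IH]; intros j r; [exists r; split; auto|].
  destruct (pderiv_pmul_pow a (t + j) r) as [r2 [E2 V2]].
  destruct (IH j r2) as [r' [E' V']]. exists r'. split.
  - intro z. simpl. rewrite (pderivn_ext t _ (pmul_pow a (t + j) r2) E2). auto.
  - intro H. apply V'. rewrite V2. apply Cmul_neq0; auto. apply CR_neq0, not_0_INR. lia.
Qed.

Lemma pderivn_vanish_at_root P a L r t :
  (forall z, peval P z = peval (pmul_pow a L r) z) -> (t < L)%nat ->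
  peval (pderivn t P) a = C0.
Proof.
  intros E Ht. rewrite (pderivn_ext t P (pmul_pow a L r) E).
  replace L with (t + (L - t))%nat by lia.
  destruct (pderivn_pmul_pow a t (L - t) r) as [r' [E' _]]. rewrite E', peval_pmul_pow.
  destruct (L - t)%nat as [|n] eqn:Hl; [lia|]. simpl.
  replace (Csub a a) with C0 by cring. set (u := Cpow C0 n); set (v := peval r' a). cring.
Qed.

Lemma pderivn_at_exact_root a t r : peval r a <> C0 ->
  peval (pderivn t (pmul_pow a t r)) a <> C0.
Proof.
  intro H. destruct (pderivn_pmul_pow a t 0 r) as [r' [E' V']].
  rewrite Nat.add_0_r in E'. rewrite E'. simpl.
  replace (Cmul (1, 0) (peval r' a)) with (peval r' a) by (set (u := peval r' a); cring).
  auto.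
Qed.

(** * Enumerating pairs of natural numbers *)

(* Cantor's diagonal enumeration of nat * nat: the pair (s, k) on the diagonal
   d = s + k gets the index tri d + k, where tri d = 0 + 1 + ... + d. *)
Fixpoint tri (d : nat) : nat := match d with O => O | S d' => (tri d' + S d')%nat end.

Definition pair_index (s k : nat) : nat := (tri (s + k) + k)%nat.

Fixpoint pair_decode (n : nat) : nat * nat :=
  match n with
  | O => (O, O)
  | S n' => match pair_decode n' with (O, k) => (S k, O) | (S s, k) => (s, S k) end
  end.

Lemma pair_index_decode n : pair_index (fst (pair_decode n)) (snd (pair_decode n)) = n.
Proof.
  induction n as [|n IH]; simpl; auto.
  destruct (pair_decode n) as [[|s] k]; simpl in *; unfold pair_index in *.
  - replace (S k + 0)%nat with (S k) by lia. simpl in *. lia.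
  - replace (s + S k)%nat with (S s + k)%nat by lia. lia.
Qed.

Lemma pair_decode_diagonal d : forall k, (k <= d)%nat ->
  pair_decode (tri d + k) = ((d - k)%nat, k).
Proof.
  induction d as [|d IHd]; intros k Hk.
  - replace k with O by lia. auto.
  - induction k as [|k IHk].
    + replace (tri (S d) + 0)%nat with (S (tri d + d)) by (simpl; lia). simpl.
      rewrite IHd by lia. rewrite Nat.sub_diag. auto.
    + replace (tri (S d) + S k)%nat with (S (tri (S d) + k)) by lia.
      cbn [pair_decode]. rewrite IHk by lia.
      destruct (S d - k)%nat eqn:E; [lia | f_equal; lia].
Qed.

Lemma pair_decode_index s k : pair_decode (pair_index s k) = (s, k).
Proof. unfold pair_index. rewrite pair_decode_diagonal by lia. f_equal; lia. Qed.

Lemma tri_ge d : (d <= tri d)%nat.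
Proof. induction d; simpl; lia. Qed.

Lemma tri_mono d d' : (d' < d)%nat -> (tri d' < tri d)%nat.
Proof.
  induction d as [|d IH]; intro H; [lia|]. simpl.
  destruct (Nat.eq_dec d' d); [subst; lia | pose proof (IH ltac:(lia)); lia].
Qed.

(* The first component of the n-th pair is at most n; this bounds the
   derivative orders of the earlier conditions by the multiplicities used. *)
Lemma pair_decode_fst_le n : (fst (pair_decode n) <= n)%nat.
Proof.
  rewrite <- (pair_index_decode n) at 2. unfold pair_index.
  pose proof (tri_ge (fst (pair_decode n) + snd (pair_decode n))). lia.
Qed.

Lemma pair_index_mono s s' k : (s' < s)%nat -> (pair_index s' k < pair_index s k)%nat.
Proof. intro H. unfold pair_index. pose proof (tri_mono (s + k) (s' + k) ltac:(lia)). lia. Qed.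

(** * Interpolation conditions and the polynomials that separate them *)

Section Interpolation.

(* The n-th interpolation condition
   prescribes the derivative of order [order n] at the point [node n]; every
   (s, k) occurs exactly once. Condition n is [repeated] when it duplicates an
   earlier one (e need not be injective). *)
Variable e : nat -> CC.

Definition order (n : nat) : nat := fst (pair_decode n).
Definition node (n : nat) : CC := e (snd (pair_decode n)).
Definition repeated (n : nat) : Prop :=
  exists m, (m < n)%nat /\ order m = order n /\ node m = node n.

Fixpoint other_factors (m i : nat) : list CC :=
  match i with
  | O => [CR 1]
  | S i' => if CC_dec (node i') (node m) then other_factors m i'
            else pmul_pow (node i') (S m) (other_factors m i')
  end.

Definition interp (m : nat) : list CC := pmul_pow (node m) (order m) (other_factors m m).

Lemma other_factors_nonzero m i : peval (other_factors m i) (node m) <> C0.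
Proof.
  induction i as [|i IH]; cbn [other_factors].
  - replace (peval [CR 1] (node m)) with (CR 1) by (simpl; set (u := node m); unfold CR; cring).
    apply CR_neq0. lra.
  - destruct (CC_dec (node i) (node m)) as [E|Ne]; auto.
    rewrite peval_pmul_pow. apply Cmul_neq0; auto. apply Cpow_neq0.
    intro E. apply Ne. symmetry. apply Csub_eq0, E.
Qed.

Lemma other_factors_root m i : forall j, (j < i)%nat -> node j <> node m ->
  exists r, forall z, peval (other_factors m i) z = peval (pmul_pow (node j) (S m) r) z.
Proof.
  induction i as [|i IH]; intros j Hj Hne; [lia|].
  cbn [other_factors]. destruct (Nat.eq_dec j i) as [->|Hneq].
  - destruct (CC_dec (node i) (node m)); [tauto|]. exists (other_factors m i). auto.
  - destruct (IH j ltac:(lia) Hne) as [r Hr].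
    destruct (CC_dec (node i) (node m)); [exists r; auto|].
    exists (pmul_pow (node i) (S m) r). intro z.
    rewrite !peval_pmul_pow, Hr, peval_pmul_pow.
    set (u := Cpow (Csub z (node i)) (S m)); set (v := Cpow (Csub z (node j)) (S m));
      set (w := peval r z). cring.
Qed.

Lemma interp_own n : peval (pderivn (order n) (interp n)) (node n) <> C0.
Proof. apply pderivn_at_exact_root, other_factors_nonzero. Qed.

(* An earlier condition at another node is killed by the factor of order M + 1. *)
Lemma interp_vanish_other_node n M : (n < M)%nat -> node n <> node M ->
  peval (pderivn (order n) (interp M)) (node n) = C0.
Proof.
  intros H Hne. destruct (other_factors_root M M n H Hne) as [r Hr].
  apply (pderivn_vanish_at_root _ _ (S M) (pmul_pow (node M) (order M) r)).
  - intro z. unfold interp. rewrite !peval_pmul_pow, Hr, peval_pmul_pow.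
    set (u := Cpow (Csub z (node M)) (order M)); set (v := Cpow (Csub z (node n)) (S M));
      set (w := peval r z). cring.
  - pose proof (pair_decode_fst_le n). unfold order. lia.
Qed.

(* Q_M satisfies all earlier conditions trivially, unless condition M is
   repeated: at a shared node an earlier condition of higher order would
   entail an earlier condition equal to condition M. *)
Lemma interp_vanish_earlier n M : (n < M)%nat -> ~ repeated M ->
  peval (pderivn (order n) (interp M)) (node n) = C0.
Proof.
  intros H Hnew. destruct (CC_dec (node n) (node M)) as [E|Ne];
    [|apply interp_vanish_other_node; auto].
  destruct (Compare_dec.lt_eq_lt_dec (order n) (order M)) as [[Hl|Heq]|Hg].
  - rewrite E. apply (pderivn_vanish_at_root _ _ (order M) (other_factors M M)); auto.
  - exfalso. apply Hnew. exists n; auto.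
  - exfalso. apply Hnew.
    exists (pair_index (order M) (snd (pair_decode n))).
    assert (Hc := pair_decode_index (order M) (snd (pair_decode n))).
    assert (Hlt := pair_index_mono (order n) (order M) (snd (pair_decode n)) Hg).
    unfold order at 2 in Hlt. rewrite pair_index_decode in Hlt.
    split; [lia|]. split.
    + unfold order at 1. rewrite Hc. auto.
    + unfold node at 1. rewrite Hc. simpl. rewrite <- E. auto.
Qed.

End Interpolation.

Fixpoint Cpsum (f : nat -> CC) (n : nat) : CC :=
  match n with O => C0 | S n' => Cadd (Cpsum f n') (f n') end.
Fixpoint Rpsum (f : nat -> R) (n : nat) : R :=
  match n with O => 0 | S n' => Rpsum f n' + f n' end.

Lemma Cpsum_ext f g n : (forall m, (m < n)%nat -> f m = g m) -> Cpsum f n = Cpsum g n.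
Proof.
  induction n as [|n IH]; intro H; simpl; auto.
  rewrite IH by (intros; apply H; lia). rewrite H by lia. auto.
Qed.

Lemma Cpsum_norm f n : Cnorm (Cpsum f n) <= Rpsum (fun m => Cnorm (f m)) n.
Proof.
  induction n as [|n IH]; simpl; [rewrite Cnorm_C0; lra|].
  eapply Rle_trans; [apply Cnorm_add | lra].
Qed.

Lemma Rpsum_nonneg f n : (forall m, 0 <= f m) -> 0 <= Rpsum f n.
Proof. intro H; induction n as [|n IH]; simpl; [lra|]. pose proof (H n); lra. Qed.

Lemma Rpsum_le_term f n m : (forall m, 0 <= f m) -> (m < n)%nat -> f m <= Rpsum f n.
Proof.
  intros H Hm; induction n as [|n IH]; [lia|]. simpl.
  destruct (Nat.eq_dec m n) as [->|Hne].
  - pose proof (Rpsum_nonneg f n H); lra.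
  - pose proof (IH ltac:(lia)). pose proof (H n). lra.
Qed.

Lemma Rpsum_le_longer f n N : (forall m, 0 <= f m) -> (n <= N)%nat -> Rpsum f n <= Rpsum f N.
Proof. intros H Hle. induction Hle as [|N _ IH]; simpl; [lra | pose proof (H N); lra]. Qed.

Lemma Rpsum_mono f g n : (forall m, f m <= g m) -> Rpsum f n <= Rpsum g n.
Proof. intro H; induction n as [|n IH]; simpl; [lra|]. pose proof (H n); lra. Qed.

Lemma Rpsum_scale c f n : Rpsum (fun m => c * f m) n = c * Rpsum f n.
Proof. induction n as [|n IH]; simpl; [ring|]. rewrite IH; ring. Qed.

Lemma half_pow_S m : (/2)^(S m) = (/2)^m / 2.
Proof. simpl. field. Qed.

Lemma half_pow_pos n : 0 < (/2)^n.
Proof. apply pow_lt. lra. Qed.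

Lemma half_pow_le1 n : (/2)^n <= 1.
Proof. induction n as [|n IH]; [simpl; lra|]. rewrite half_pow_S. lra. Qed.

Lemma Rpsum_geometric_tail f N : (forall m, 0 <= f m) ->
  (forall m, (N <= m)%nat -> f m <= (/2)^m) ->
  forall n, Rpsum f n <= Rpsum f N + 2.
Proof.
  intros H0 H n.
  assert (K : forall k, Rpsum f (N + k) <= Rpsum f N + 2 - 2 * (/2)^(N + k)).
  { induction k as [|k IH].
    - rewrite Nat.add_0_r. pose proof (half_pow_le1 N). lra.
    - replace (N + S k)%nat with (S (N + k)) by lia. simpl Rpsum.
      pose proof (H (N + k)%nat ltac:(lia)). rewrite half_pow_S. lra. }
  destruct (Compare_dec.le_lt_dec N n) as [Hle|Hlt].
  - replace n with (N + (n - N))%nat by lia.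
    pose proof (K (n - N)%nat). pose proof (half_pow_pos (N + (n - N))). lra.
  - pose proof (Rpsum_le_longer f n N H0 ltac:(lia)). lra.
Qed.

Lemma geometric_increments_cv u N : (forall m, (N <= m)%nat -> Rabs (u (S m) - u m) <= (/2)^m) ->
  exists l, Un_cv u l.
Proof.
  intro H.
  assert (Tele : forall k m, (N <= m)%nat -> Rabs (u (m + k)%nat - u m) <= 2*(/2)^m - 2*(/2)^(m+k)).
  { intro k; induction k as [|k IH]; intros m Hm.
    - rewrite Nat.add_0_r, Rminus_diag, Rabs_R0. lra.
    - replace (m + S k)%nat with (S (m + k)) by lia.
      replace (u (S (m + k)) - u m) with ((u (S (m+k)) - u (m+k)%nat) + (u (m+k)%nat - u m)) by ring.
      eapply Rle_trans; [apply Rabs_triang|].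
      pose proof (H (m+k)%nat ltac:(lia)). pose proof (IH m Hm). rewrite half_pow_S. lra. }
  enough (Cauchy : Cauchy_crit u) by (destruct (R_complete u Cauchy) as [l Hl]; eauto).
  intros eps He.
  destruct (pow_lt_1_zero (/2) ltac:(rewrite Rabs_right; lra) (eps/4) ltac:(lra)) as [N1 HN1].
  set (K := Nat.max N N1). exists K. intros n m Hn Hm. unfold Rdist.
  pose proof (Tele (n - K)%nat K ltac:(lia)). pose proof (Tele (m - K)%nat K ltac:(lia)).
  replace (K + (n - K))%nat with n in * by lia. replace (K + (m - K))%nat with m in * by lia.
  pose proof (HN1 K ltac:(lia)). rewrite Rabs_right in H2 by (left; apply half_pow_pos).
  pose proof (half_pow_pos n). pose proof (half_pow_pos m).
  replace (u n - u m) with ((u n - u K) - (u m - u K)) by ring.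
  eapply Rle_lt_trans; [apply Rabs_triang|]. rewrite Rabs_Ropp. lra.
Qed.

(* The limit of a convergent real sequence (0 otherwise). *)
Definition Rlim (u : nat -> R) : R :=
  match excluded_middle_informative (exists l, Un_cv u l) with
  | left H => proj1_sig (constructive_indefinite_description _ H)
  | right _ => 0
  end.

Lemma Rlim_spec u : (exists l, Un_cv u l) -> Un_cv u (Rlim u).
Proof.
  intro H. unfold Rlim. destruct (excluded_middle_informative (exists l, Un_cv u l)); [|tauto].
  apply (proj2_sig (constructive_indefinite_description _ e)).
Qed.

Lemma cv_const c : Un_cv (fun _ => c) c.
Proof. intros eps He. exists O. intros. unfold Rdist. rewrite Rminus_diag, Rabs_R0. lra. Qed.

Lemma cv_eventually_const u l c N : Un_cv u l -> (forall n, (N <= n)%nat -> u n = c) -> l = c.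
Proof.
  intros H E. apply (UL_sequence u); auto. intros eps He. exists N. intros n Hn.
  rewrite E by lia. unfold Rdist. rewrite Rminus_diag, Rabs_R0. lra.
Qed.

Lemma Cnorm_lim_le (w : nat -> CC) W c :
  Un_cv (fun n => fst (w n)) (fst W) -> Un_cv (fun n => snd (w n)) (snd W) ->
  (forall n, Cnorm (w n) <= c) -> Cnorm W <= c.
Proof.
  intros H1 H2 H. assert (Hc : 0 <= c) by (pose proof (H O); pose proof (Cnorm_nonneg (w O)); lra).
  apply Cnorm_le_of_sq; auto.
  apply Rle_cv_lim with (Un := fun n => fst (w n) * fst (w n) + snd (w n) * snd (w n))
                        (Vn := fun _ => c * c).
  - intro n. pose proof (H n) as Hn. apply Rsqr_incr_1 in Hn; [|apply Cnorm_nonneg | lra].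
    unfold Rsqr, Cnorm in Hn. rewrite sqrt_sqrt in Hn by nra. exact Hn.
  - apply CV_plus; apply CV_mult; auto.
  - apply cv_const.
Qed.

Lemma exists_nat_ge x : exists n, x <= INR n.
Proof.
  destruct (archimed (Rabs x)) as [H _].
  assert (0 <= IZR (up (Rabs x))) by (pose proof (Rabs_pos x); lra).
  apply le_IZR in H0. exists (Z.to_nat (up (Rabs x))).
  rewrite INR_IZR_INZ, Z2Nat.id by lia. pose proof (Rle_abs x). lra.
Qed.

Lemma dense_nonzero_near (A : CC -> Prop) v del : dense_set A -> 0 < del ->
  exists b, A b /\ b <> C0 /\ Cnorm (Csub b v) < del.
Proof.
  intros Hd Hdel.
  set (w := if CC_dec v C0 then CR (del/2) else v).
  assert (Hw : w <> C0 /\ Cnorm (Csub w v) <= del/2).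
  { unfold w. destruct (CC_dec v C0) as [E|E].
    - split; [apply CR_neq0; lra|].
      rewrite E. replace (Csub (CR (del/2)) C0) with (CR (del/2)) by (unfold CR; cring).
      rewrite Cnorm_CR, Rabs_right; lra.
    - split; auto. replace (Csub v v) with C0 by cring. rewrite Cnorm_C0; lra. }
  destruct Hw as [Hw0 Hwv]. pose proof (Cnorm_pos w Hw0).
  destruct (Hd w (Rmin (del/2) (Cnorm w))) as [b [Hb Hbw]]; [apply Rmin_pos; lra|].
  pose proof (Rmin_l (del/2) (Cnorm w)); pose proof (Rmin_r (del/2) (Cnorm w)).
  exists b. split; [|split]; auto.
  - intro E. rewrite E in Hbw. replace (Csub C0 w) with (Copp w) in Hbw by cring.
    rewrite Cnorm_opp in Hbw. lra.
  - replace (Csub b v) with (Cadd (Csub b w) (Csub w v)) by cring.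
    eapply Rle_lt_trans; [apply Cnorm_add | lra].
Qed.

Section Coefficients.

Variable A : CC -> Prop.
Variable e : nat -> CC.
Hypothesis A_dense : dense_set A.

Definition weight (n : nat) : R :=
  Rpsum (fun t => pmajor (INR n + 1) (pderivn t (interp e n))) (S n).

Definition pivot (n : nat) : CC := peval (pderivn (order n) (interp e n)) (node e n).

Definition prior_value (ep : nat -> CC) (n : nat) : CC :=
  Cpsum (fun m => Cmul (ep m) (peval (pderivn (order n) (interp e m)) (node e n))) n.

(* An admissible n-th coefficient c, given the earlier ones: small enough for
   convergence, zero on repeated conditions, and otherwise steering the value
   of the n-th condition to a nonzero point of A. *)
Definition admissible (ep : nat -> CC) (n : nat) (c : CC) : Prop :=
  Cnorm c * weight n <= (/2)^n /\ (repeated e n -> c = C0) /\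
  (~ repeated e n -> A (Cadd (prior_value ep n) (Cmul c (pivot n))) /\
                    Cadd (prior_value ep n) (Cmul c (pivot n)) <> C0).

Lemma weight_nonneg n : 0 <= weight n.
Proof. apply Rpsum_nonneg. intro. apply pmajor_nonneg. pose proof (pos_INR n). lra. Qed.

(* Since the pivot is nonzero, c = (b - prior) / pivot hits a point b of A
   chosen close enough to the prior value. *)
Lemma admissible_exists ep n : exists c, admissible ep n c.
Proof.
  destruct (classic (repeated e n)) as [Hs|Hs].
  { exists C0. split; [|split; [auto | tauto]].
    rewrite Cnorm_C0. pose proof (half_pow_pos n). lra. }
  set (v := prior_value ep n). set (q := pivot n).
  assert (Hq : q <> C0) by apply interp_own.
  pose proof (Cnorm_pos q Hq). pose proof (weight_nonneg n). pose proof (half_pow_pos n).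
  set (del := (/2)^n / (weight n + 1) * Cnorm q).
  destruct (dense_nonzero_near A v del A_dense) as [b [Hb [Hb0 Hbv]]].
  { unfold del. apply Rmult_lt_0_compat; auto. apply Rdiv_lt_0_compat; lra. }
  exists (Cmul (Csub b v) (Complex.Cinv q)).
  assert (Hval : Cadd v (Cmul (Cmul (Csub b v) (Complex.Cinv q)) q) = b).
  { pose proof (Cinv_r q Hq) as Hinv. set (iq := Complex.Cinv q) in *.
    replace (Cadd v (Cmul (Cmul (Csub b v) iq) q)) with (Cadd v (Cmul (Csub b v) (Cmul q iq)))
      by cring.
    rewrite Hinv. unfold CR. cring. }
  split; [|split; [tauto | intros _; fold v q; rewrite Hval; auto]].
  rewrite Cnorm_mul, Cnorm_inv by auto.
  assert (Cnorm (Csub b v) * / Cnorm q < (/2)^n / (weight n + 1)).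
  { apply Rmult_lt_reg_r with (Cnorm q); auto.
    rewrite Rmult_assoc, Rinv_l, Rmult_1_r by lra. exact Hbv. }
  assert ((/2)^n / (weight n + 1) * weight n <= (/2)^n).
  { apply Rmult_le_reg_r with (weight n + 1); [lra|].
    replace ((/2)^n / (weight n + 1) * weight n * (weight n + 1)) with ((/2)^n * weight n)
      by (field; lra).
    nra. }
  assert (0 <= Cnorm (Csub b v) * / Cnorm q)
    by (apply Rmult_le_pos; [apply Cnorm_nonneg | left; apply Rinv_0_lt_compat; auto]).
  nra.
Qed.

Definition choose_coef (ep : nat -> CC) (n : nat) : CC :=
  proj1_sig (constructive_indefinite_description _ (admissible_exists ep n)).

(* Recursive choice: [coef_upto n] holds the first n coefficients. *)
Fixpoint coef_upto (n : nat) : nat -> CC :=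
  match n with
  | O => fun _ => C0
  | S n' => fun m => if Nat.eqb m n' then choose_coef (coef_upto n') n' else coef_upto n' m
  end.

Definition coef (m : nat) : CC := coef_upto (S m) m.

Lemma coef_upto_coef n m : (m < n)%nat -> coef_upto n m = coef m.
Proof.
  induction n as [|n IH]; intro H; [lia|]. simpl.
  destruct (Nat.eqb_spec m n) as [->|Hne].
  - unfold coef. simpl. rewrite Nat.eqb_refl. auto.
  - apply IH. lia.
Qed.

Lemma coef_admissible n : admissible coef n (coef n).
Proof.
  assert (E : coef n = choose_coef (coef_upto n) n) by (unfold coef; simpl; rewrite Nat.eqb_refl; auto).
  assert (V : prior_value (coef_upto n) n = prior_value coef n).
  { apply Cpsum_ext. intros m Hm. rewrite coef_upto_coef; auto. }
  pose proof (proj2_sig (constructive_indefinite_description _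
                (admissible_exists (coef_upto n) n))) as S.
  fold (choose_coef (coef_upto n) n) in S. rewrite <- E in S. unfold admissible in *.
  rewrite <- V. exact S.
Qed.

End Coefficients.

(** * The series sum_m c_m Q_m and its term-by-term derivatives *)

Section Series.

Variable e : nat -> CC.
Variable c : nat -> CC.
Hypothesis c_small : forall n, Cnorm (c n) * weight e n <= (/2)^n.

Definition series_term (s : nat) (z : CC) (m : nat) : CC :=
  Cmul (c m) (peval (pderivn s (interp e m)) z).

Definition partial_sum (s : nat) (z : CC) (n : nat) : CC := Cpsum (series_term s z) n.

(* The candidate for the s-th derivative of the entire function. *)
Definition series_fun (s : nat) (z : CC) : CC :=
  (Rlim (fun n => fst (partial_sum s z n)), Rlim (fun n => snd (partial_sum s z n))).

Lemma coef_major_small s m : (s <= m)%nat ->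
  Cnorm (c m) * pmajor (INR m + 1) (pderivn s (interp e m)) <= (/2)^m.
Proof.
  intro Hs.
  assert (pmajor (INR m + 1) (pderivn s (interp e m)) <= weight e m).
  { apply (Rpsum_le_term (fun t => pmajor (INR m + 1) (pderivn t (interp e m)))); [|lia].
    intro. apply pmajor_nonneg. pose proof (pos_INR m). lra. }
  pose proof (Cnorm_nonneg (c m)). pose proof (c_small m).
  apply Rle_trans with (Cnorm (c m) * weight e m); [apply Rmult_le_compat_l|]; lra.
Qed.

Lemma series_term_small s z m : (s <= m)%nat -> Cnorm z <= INR m + 1 ->
  Cnorm (series_term s z m) <= (/2)^m.
Proof.
  intros Hs Hz. unfold series_term. rewrite Cnorm_mul.
  eapply Rle_trans; [|apply (coef_major_small s m Hs)].
  apply Rmult_le_compat_l; [apply Cnorm_nonneg | apply peval_bound, Hz].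
Qed.

Lemma eventually_large s z : exists N, forall m, (N <= m)%nat -> (s <= m)%nat /\ Cnorm z <= INR m.
Proof.
  destruct (exists_nat_ge (Cnorm z)) as [N0 HN0]. exists (Nat.max s N0). intros m Hm.
  split; [lia|]. assert (INR N0 <= INR m) by (apply le_INR; lia). lra.
Qed.

Lemma partial_sum_cv s z :
  Un_cv (fun n => fst (partial_sum s z n)) (fst (series_fun s z)) /\
  Un_cv (fun n => snd (partial_sum s z n)) (snd (series_fun s z)).
Proof.
  destruct (eventually_large s z) as [N HN].
  assert (Ht : forall m, (N <= m)%nat -> Cnorm (series_term s z m) <= (/2)^m)
    by (intros m Hm; destruct (HN m Hm); apply series_term_small; auto; lra).
  split; apply Rlim_spec; apply (geometric_increments_cv _ N); intros m Hm;
    unfold partial_sum; cbn [Cpsum Cadd fst snd]; specialize (Ht m Hm);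
    pose proof (Cnorm_components (series_term s z m)) as [H1 H2].
  - replace (fst (Cpsum (series_term s z) m) + fst (series_term s z m)
             - fst (Cpsum (series_term s z) m)) with (fst (series_term s z m)) by ring. lra.
  - replace (snd (Cpsum (series_term s z) m) + snd (series_term s z m)
             - snd (Cpsum (series_term s z) m)) with (snd (series_term s z m)) by ring. lra.
Qed.

Lemma partial_sum_taylor s z h n :
  Csub (Csub (partial_sum s (Cadd z h) n) (partial_sum s z n)) (Cmul (partial_sum (S s) z n) h)
  = Cpsum (fun m => Cmul (c m) (taylor_rem (pderivn s (interp e m)) z h)) n.
Proof.
  induction n as [|n IH]; unfold partial_sum in *; simpl; [cring|].
  rewrite <- IH. unfold series_term, taylor_rem. rewrite pderivn_S.
  set (a := Cpsum (series_term s (Cadd z h)) n); set (b := Cpsum (series_term s z) n);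
  set (a' := Cpsum (series_term (S s) z) n); set (u := c n);
  set (x := peval (pderivn s (interp e n)) (Cadd z h)); set (y := peval (pderivn s (interp e n)) z);
  set (w := peval (pderiv (pderivn s (interp e n))) z). cring.
Qed.

Lemma partial_sum_taylor_bound s z : exists K, 0 <= K /\ forall h n, Cnorm h <= 1 ->
  Cnorm (Csub (Csub (partial_sum s (Cadd z h) n) (partial_sum s z n))
              (Cmul (partial_sum (S s) z n) h)) <= Cnorm h * Cnorm h * K.
Proof.
  destruct (eventually_large s z) as [N HN].
  set (rad := fun m => Rmax (Cnorm z + 1) (INR m + 1)).
  set (b := fun m => Cnorm (c m) * pmajor (rad m) (pderivn s (interp e m))).
  assert (Hb0 : forall m, 0 <= b m).
  { intro m. unfold b. apply Rmult_le_pos; [apply Cnorm_nonneg | apply pmajor_nonneg].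
    unfold rad. pose proof (Rmax_l (Cnorm z + 1) (INR m + 1)); pose proof (Cnorm_nonneg z); lra. }
  assert (Hbt : forall m, (N <= m)%nat -> b m <= (/2)^m).
  { intros m Hm. destruct (HN m Hm) as [Hs Hz]. unfold b, rad. rewrite Rmax_right by lra.
    apply coef_major_small, Hs. }
  exists (Rpsum b N + 2). split; [pose proof (Rpsum_nonneg b N Hb0); lra|].
  intros h n Hh. rewrite partial_sum_taylor. eapply Rle_trans; [apply Cpsum_norm|].
  eapply Rle_trans; [apply Rpsum_mono with (g := fun m => Cnorm h * Cnorm h * b m)|].
  - intro m. rewrite Cnorm_mul. unfold b.
    pose proof (taylor_rem_bound (rad m) (pderivn s (interp e m)) z h (Rmax_l _ _) Hh).
    pose proof (Cnorm_nonneg (c m)).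
    replace (Cnorm h * Cnorm h * (Cnorm (c m) * pmajor (rad m) (pderivn s (interp e m))))
      with (Cnorm (c m) * (Cnorm h * Cnorm h * pmajor (rad m) (pderivn s (interp e m)))) by ring.
    apply Rmult_le_compat_l; auto.
  - rewrite Rpsum_scale. apply Rmult_le_compat_l; [pose proof (Cnorm_nonneg h); nra|].
    apply Rpsum_geometric_tail; auto.
Qed.

(* Term-by-term differentiation: the (s+1)-th series is the derivative of the
   s-th one, by passing to the limit in the uniform remainder bound. *)
Lemma series_fun_deriv s : is_complex_derivative (series_fun s) (series_fun (S s)).
Proof.
  intros z eps He. destruct (partial_sum_taylor_bound s z) as [K [HK Hrem]].
  exists (Rmin 1 (eps / (K + 1))). split; [apply Rmin_pos; [lra | apply Rdiv_lt_0_compat; lra]|].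
  intros h Hh.
  assert (H1 : Cnorm h <= 1) by (pose proof (Rmin_l 1 (eps/(K+1))); lra).
  assert (H2 : Cnorm h <= eps / (K+1)) by (pose proof (Rmin_r 1 (eps/(K+1))); lra).
  destruct (partial_sum_cv s (Cadd z h)) as [A1 B1].
  destruct (partial_sum_cv s z) as [A2 B2].
  destruct (partial_sum_cv (S s) z) as [A3 B3].
  assert (Hlim : Cnorm (Csub (Csub (series_fun s (Cadd z h)) (series_fun s z))
                             (Cmul (series_fun (S s) z) h)) <= Cnorm h * Cnorm h * K).
  { apply (Cnorm_lim_le (fun n => Csub (Csub (partial_sum s (Cadd z h) n) (partial_sum s z n))
                                       (Cmul (partial_sum (S s) z n) h)));
      [simpl .. | intro n; apply Hrem, H1].
    - apply CV_plus; [apply CV_plus; [auto | apply CV_opp; auto]|].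
      apply CV_opp, CV_plus; [|apply CV_opp]; apply CV_mult; auto; apply cv_const.
    - apply CV_plus; [apply CV_plus; [auto | apply CV_opp; auto]|].
      apply CV_opp, CV_plus; apply CV_mult; auto; apply cv_const. }
  pose proof (Cnorm_nonneg h).
  assert (Cnorm h * K <= eps).
  { apply (Rmult_le_compat_r (K+1)) in H2; [|lra].
    replace (eps / (K + 1) * (K + 1)) with eps in H2 by (field; lra). nra. }
  nra.
Qed.

Hypothesis c_repeated : forall n, repeated e n -> c n = C0.

(* At a new condition n, the later terms contribute nothing: the value is the
   one prescribed when the n-th coefficient was chosen. *)
Lemma series_fun_at_node n : ~ repeated e n ->
  series_fun (order n) (node e n) = Cadd (prior_value e c n) (Cmul (c n) (pivot e n)).
Proof.
  intros Hnew. set (v := Cadd (prior_value e c n) (Cmul (c n) (pivot e n))).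
  assert (E : forall M, (S n <= M)%nat -> partial_sum (order n) (node e n) M = v).
  { intros M HM. induction HM as [|M HM IH]; [reflexivity|].
    unfold partial_sum in *. simpl. rewrite IH. unfold series_term.
    destruct (classic (repeated e M)) as [Hs|Hs].
    - rewrite (c_repeated M Hs). set (u := peval (pderivn (order n) (interp e M)) (node e n)).
      cring.
    - rewrite interp_vanish_earlier by (auto; lia). cring. }
  destruct (partial_sum_cv (order n) (node e n)) as [A1 B1].
  pose proof (cv_eventually_const _ _ (fst v) (S n) A1 ltac:(intros M HM; cbv beta; rewrite (E M HM); auto)).
  pose proof (cv_eventually_const _ _ (snd v) (S n) B1 ltac:(intros M HM; cbv beta; rewrite (E M HM); auto)).
  destruct (series_fun (order n) (node e n)); destruct v; simpl in *; subst; auto.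
Qed.

End Series.

(** * Polynomial functions have eventually vanishing derivatives *)

Lemma Cpsum_shift f n : Cpsum f (S n) = Cadd (f O) (Cpsum (fun k => f (S k)) n).
Proof.
  induction n as [|n IH]; [simpl; set (u := f O); cring|].
  change (Cpsum f (S (S n))) with (Cadd (Cpsum f (S n)) (f (S n))). rewrite IH. simpl.
  set (u := f O); set (v := Cpsum (fun k => f (S k)) n); set (w := f (S n)). cring.
Qed.

Lemma Cpsum_mul a f n : Cmul a (Cpsum f n) = Cpsum (fun k => Cmul a (f k)) n.
Proof.
  induction n as [|n IH]; simpl; [cring|].
  rewrite <- IH. set (u := Cpsum f n); set (v := f n). cring.
Qed.

Lemma Csum_Cpsum g n : Csum g n = Cpsum g (S n).
Proof. induction n as [|n IH]; simpl; [set (u := g O); cring | rewrite IH; auto]. Qed.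

Lemma peval_coefficients (c : nat -> CC) z len : forall a,
  peval (map c (seq a len)) z = Cpsum (fun k => Cmul (c (a + k)%nat) (Cpow z k)) len.
Proof.
  induction len as [|len IH]; intro a; [reflexivity|].
  rewrite Cpsum_shift. simpl. rewrite IH, Cpsum_mul. apply f_equal2.
  - rewrite Nat.add_0_r. set (u := c a); cring.
  - apply Cpsum_ext. intros m _. replace (a + S m)%nat with (S a + m)%nat by lia.
    set (u := c (S a + m)%nat); set (v := Cpow z m). cring.
Qed.

(* If F is a chain of successive derivatives and F (S n) is nonzero somewhere
   for every n, then F 0 is not a polynomial: the derivative of order n + 1
   of a polynomial of degree n vanishes. *)
Lemma derivative_chain_not_polynomial (F : nat -> CC -> CC) :
  (forall s, is_complex_derivative (F s) (F (S s))) ->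
  (forall n, exists z, F (S n) z <> C0) -> ~ is_polynomial (F O).
Proof.
  intros Hder Hnz [n [c Hc]].
  set (l := map c (seq 0 (S n))).
  assert (Hl : forall t z, F t z = peval (pderivn t l) z).
  { induction t as [|t IH]; intro z.
    - change (pderivn 0 l) with l. rewrite Hc, Csum_Cpsum. unfold l.
      rewrite peval_coefficients. reflexivity.
    - apply (deriv_unique (F t)); [apply Hder|].
      apply deriv_ext with (f1 := peval (pderivn t l)); [intro; symmetry; auto|].
      rewrite pderivn_S. apply deriv_peval. }
  destruct (Hnz n) as [z Hz]. apply Hz.
  rewrite Hl, pderivn_short; [reflexivity|]. unfold l. rewrite length_map, length_seq. lia.
Qed.

Section MainConstruction.

Variable A : CC -> Prop.
Variable e : nat -> CC.
Hypothesis A_dense : dense_set A.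

Let c := coef A e A_dense.

Lemma coef_small n : Cnorm (c n) * weight e n <= (/2)^n.
Proof. apply (coef_admissible A e A_dense n). Qed.

Lemma coef_repeated n : repeated e n -> c n = C0.
Proof. apply (coef_admissible A e A_dense n). Qed.

(* Every interpolation condition is met: the value f^(order n)(node n) is a
   nonzero point of A. Repeated conditions reduce to their first occurrence. *)
Lemma series_values n :
  A (series_fun e c (order n) (node e n)) /\ series_fun e c (order n) (node e n) <> C0.
Proof.
  induction n as [n IH] using (well_founded_induction Wf_nat.lt_wf).
  destruct (classic (repeated e n)) as [[m [Hm [Ho Hp]]]|Hnew].
  - rewrite <- Ho, <- Hp. apply IH, Hm.
  - rewrite (series_fun_at_node e c coef_small coef_repeated n Hnew).
    apply (coef_admissible A e A_dense n), Hnew.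
Qed.

End MainConstruction.

Theorem corollary2 (A : CC -> Prop) :
  countable_set A -> dense_set A ->
  exists f : CC -> CC, transcendental_entire f /\
    exists F : nat -> (CC -> CC),
      F O = f /\
      (forall s : nat, is_complex_derivative (F s) (F (S s))) /\
      (forall (s : nat) (a : CC), A a -> A (F s a)).
Proof.
  intros [e He] Hd.
  set (F := series_fun e (coef A e Hd)).
  assert (Hder : forall s, is_complex_derivative (F s) (F (S s)))
    by (intro s; apply series_fun_deriv, coef_small).
  (* The condition with index pair_index s k concerns f^(s) at e k. *)
  assert (Hval : forall s k, A (F s (e k)) /\ F s (e k) <> C0).
  { intros s k. pose proof (series_values A e Hd (pair_index s k)) as V.
    unfold order, node in V. rewrite pair_decode_index in V. exact V. }
  exists (F O). split; [split|].
  - exists (F 1%nat). apply Hder.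
  - apply derivative_chain_not_polynomial; auto.
    intro n. exists (e O). apply Hval.
  - exists F. split; [reflexivity | split; auto].
    intros s a Ha. destruct (proj1 (He a) Ha) as [k <-]. apply Hval.
Qed.
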